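(* In the setting below, suppose that the function $x\mapsto f(x)+g(Ax)$ is bounded below on $\mathbb R^n$ (equivalently, $F(x)=f(x)+g(Ax)+\Phi_{0,\lambda}(Bx-b)$ is bounded below) and that $\{x:\ x\in\operatorname{ri}(\operatorname{dom}f),\ Ax\in\operatorname{ri}(\operatorname{dom}g),\ Bx=b\}\neq\emptyset$, where ''$\operatorname{ri}$'' may be omitted for $f$ (resp. $g$) if $f$ (resp. $g$) is polyhedral. Then for every $\mu>0$ the problem $\inf_{w=[y;z]}\ \Xi(w)+\Psi_{0,\mu}(z)$ has a global minimizer.
   Context: Let $f:\mathbb R^n\to(-\infty,\infty]$ and $g:\mathbb R^m\to(-\infty,\infty]$ be proper, lsc and convex, with convex conjugates $f^*(q)=\sup_x\{\langle q,x\rangle-f(x)\}$, $g^*$. Let $A\in\mathbb R^{m\times n}$, $B\in\mathbb R^{r\times n}$, $b\in\mathbb R^r$, $\lambda,\mu\in\mathbb R^r$ with $\lambda,\mu>0$. $\Phi_{0,\lambda}(u)=\sum_i\lambda_i\mathbf 1_{\{u_i\neq0\}}$. For $w=[y;z]\in\mathbb R^m\times\mathbb R^r$, $\Xi(w):=f^*(-A^\top y-B^\top z)+g^*(y)+\langle b,z\rangle$. $\Psi_{0,\mu}(z)=\sum_{i=1}^r\mu_i\mathbf 1_{\{z_i\ne0\}}$. $\operatorname{ri}$ denotes relative interior. *)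

From HB Require Import structures.
From mathcomp Require Import all_boot all_order all_algebra.
From mathcomp Require Import all_classical all_reals ereal.
Set Implicit Arguments. Unset Strict Implicit. Unset Printing Implicit Defensive.
Import Order.TTheory GRing.Theory Num.Theory.
Local Open Scope ring_scope.
Local Open Scope classical_set_scope.

Section ConvexDefs.
Variable R : realType.

Definition dotv (n : nat) (u v : 'cV[R]_n) : R := \sum_(i < n) u i 0 * v i 0.

Definition dom (n : nat) (f : 'cV[R]_n -> \bar R) : set 'cV[R]_n :=
  [set x | (f x < +oo)%E].

Definition proper_fun (n : nat) (f : 'cV[R]_n -> \bar R) : Prop :=
  (forall x, f x != -oo%E) /\ (exists x, (f x < +oo)%E).

Definition convex_fun (n : nat) (f : 'cV[R]_n -> \bar R) : Prop :=
  forall (x y : 'cV[R]_n) (t : R), 0 <= t -> t <= 1 ->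
    (f x < +oo)%E -> (f y < +oo)%E ->
    (f (t *: x + (1 - t) *: y)%R <= (t * fine (f x) + (1 - t) * fine (f y))%:E)%E.

Definition lsc_fun (n : nat) (f : 'cV[R]_n -> \bar R) : Prop :=
  forall (x : 'cV[R]_n) (a : R), (a%:E < f x)%E ->
    exists2 d : R, 0 < d &
      forall y : 'cV[R]_n, (forall i, `|y i 0 - x i 0| < d) -> (a%:E < f y)%E.

Definition conj_fun (n : nat) (f : 'cV[R]_n -> \bar R) (q : 'cV[R]_n) : \bar R :=
  ereal_sup [set ((dotv q x)%:E - f x)%E | x in [set: 'cV[R]_n]].

Definition aff_hull (n : nat) (C : set 'cV[R]_n) : set 'cV[R]_n :=
  [set y | exists (k : nat) (p : 'I_k -> 'cV[R]_n) (c : 'I_k -> R),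
      (forall j, C (p j)) /\ \sum_(j < k) c j = 1 /\ y = \sum_(j < k) c j *: p j].

Definition rel_int (n : nat) (C : set 'cV[R]_n) : set 'cV[R]_n :=
  [set x | C x /\ exists2 e : R, 0 < e &
      forall y, aff_hull C y -> (forall i, `|y i 0 - x i 0| < e) -> C y].

(* polyhedral function: its epigraph is a polyhedral set (finite intersection
   of closed half-spaces of R^n x R) *)
Definition polyhedral_fun (n : nat) (f : 'cV[R]_n -> \bar R) : Prop :=
  exists (k : nat) (a : 'I_k -> 'cV[R]_n) (al be : 'I_k -> R),
    forall (x : 'cV[R]_n) (t : R),
      (f x <= t%:E)%E <-> (forall j, dotv (a j) x + al j * t <= be j).

Definition Psi0 (r : nat) (mu z : 'cV[R]_r) : R :=
  \sum_(i < r) mu i 0 * (z i 0 != 0)%:R.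

Definition Xi (n m r : nat) (f : 'cV[R]_n -> \bar R) (g : 'cV[R]_m -> \bar R)
    (A : 'M[R]_(m, n)) (B : 'M[R]_(r, n)) (b : 'cV[R]_r)
    (y : 'cV[R]_m) (z : 'cV[R]_r) : \bar R :=
  (conj_fun f (- (A^T *m y) - (B^T *m z)) + conj_fun g y + (dotv b z)%:E)%E.

End ConvexDefs.

From HB Require Import structures.
From mathcomp Require Import all_boot all_order all_algebra.
From mathcomp Require Import all_classical all_reals ereal.
From mathcomp Require Import ring lra.
Import Order.TTheory GRing.Theory Num.Theory.
Local Open Scope ring_scope.
Local Open Scope classical_set_scope.

Set Implicit Arguments. Unset Strict Implicit. Unset Printing Implicit Defensive.

(* For a support pattern S, the dual problem restricted to the z supported on S is the
   Lagrangian dual of the primal problem in which only the constraints (B x)_i = b_i,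
   i in S, are kept; let p(S) be its value. Weak duality gives Xi >= -p(S) on that slice,
   and the qualification condition yields Lagrange multipliers (y, z), supported on S,
   with Xi(y, z) <= -p(S). Hence inf (Xi + Psi) = min_S (-p(S) + sum_(i in S) mu_i), a
   minimum over finitely many S, attained by the multipliers of a minimising S.
   The multiplier rule is proved for convex problems with finitely many affine
   constraints and a feasible relative-interior point, one constraint at a time, the
   multiplier of a single constraint being a supremum of slopes; f and g enter through
   their graphs (relative-interior case) or their epigraphs (polyhedral case). *)

Section ConvexCombinations.
Variables (R : realType) (V : Type) (comb : R -> V -> V -> V).

Definition affine_fun (l : V -> R) :=
  forall t u v, l (comb t u v) = t * l u + (1 - t) * l v.

Definition convex_set (D : set V) :=
  forall t u v, 0 <= t -> t <= 1 -> D u -> D v -> D (comb t u v).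

Definition convex_on (D : set V) (H : V -> R) :=
  forall t u v, 0 <= t -> t <= 1 -> D u -> D v ->
    H (comb t u v) <= t * H u + (1 - t) * H v.

(* [comb (1 + e) v0 v] lies on the ray from [v] through [v0], slightly beyond [v0]:
   this is the algebraic form of "[v0] is in the relative interior of [D]". *)
Definition ri_point (D : set V) v0 := D v0 /\ forall v, D v ->
  exists2 e : R, 0 < e & forall e', 0 < e' -> e' <= e -> D (comb (1 + e') v0 v).

Lemma convex_onDr (D : set V) H a :
  convex_on D H -> affine_fun a -> convex_on D (fun v => H v + a v).
Proof.
move=> cH aa t u v t0 t1 Du Dv; rewrite aa.
have := cH t u v t0 t1 Du Dv; lra.
Qed.

Lemma affine_fun_convex_on (D : set V) a : affine_fun a -> convex_on D a.
Proof. by move=> aa t u v _ _ _ _; rewrite aa. Qed.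

Lemma affine_funZ (a : V -> R) k : affine_fun a -> affine_fun (fun v => k * a v).
Proof. by move=> aa t u v; rewrite aa; ring. Qed.

Lemma affine_fun_sum (I : finType) (l : I -> V -> R) (J : {set I}) (c : I -> R) :
  (forall i, affine_fun (l i)) -> affine_fun (fun v => \sum_(i in J) c i * l i v).
Proof.
move=> hl t u v.
by rewrite !mulr_sumr -big_split /=; apply: eq_bigr => i _; rewrite hl; ring.
Qed.

Lemma sub_convex_on (D D' : set V) H : D' `<=` D -> convex_on D H -> convex_on D' H.
Proof. by move=> sD cH t u v t0 t1 Du Dv; apply: cH => //; apply: sD. Qed.

Lemma convex_set_eq0 (I : finType) (l : I -> V -> R) (S : {set I}) (D : set V) :
  (forall i, affine_fun (l i)) -> convex_set D ->
  convex_set (fun v => D v /\ forall i, i \in S -> l i v = 0).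
Proof.
move=> hl cD t u v t0 t1 [Du hu] [Dv hv]; split; first exact: cD.
by move=> i iS; rewrite hl hu // hv // !mulr0 addr0.
Qed.

Lemma convex_set_le0 (I : finType) (l : I -> V -> R) (S : {set I}) (D : set V) :
  (forall i, affine_fun (l i)) -> convex_set D ->
  convex_set (fun v => D v /\ forall i, i \in S -> l i v <= 0).
Proof.
move=> hl cD t u v t0 t1 [Du hu] [Dv hv]; split; first exact: cD.
move=> i iS; rewrite hl; have := hu i iS; have := hv i iS.
have : 0 <= 1 - t by rewrite subr_ge0.
by move=> t2 h1 h2; rewrite -oppr_ge0 opprD;
  apply: addr_ge0; rewrite -mulrN; apply: mulr_ge0 => //; rewrite oppr_ge0.
Qed.

Lemma ri_point_eq0 (I : finType) (l : I -> V -> R) (S : {set I}) (D : set V) v0 :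
  (forall i, affine_fun (l i)) -> ri_point D v0 -> (forall i, i \in S -> l i v0 = 0) ->
  ri_point (fun v => D v /\ forall i, i \in S -> l i v = 0) v0.
Proof.
move=> hl [Dv0 rD] hv0; split; first by split.
move=> v [Dv hv]; have [e e0 he] := rD v Dv; exists e => // e' e'0 e'e.
split; first exact: he.
by move=> i iS; rewrite hl hv0 // hv // !mulr0 addr0.
Qed.

Section OneConstraint.
Variables (D : set V) (H l : V -> R) (p : R).
Hypotheses (cD : convex_set D) (cH : convex_on D H) (al : affine_fun l).

(* The multiplier of the constraint [l] is the supremum of these slopes. *)
Definition slopes : set R := [set (p - H u) / l u | u in [set u | D u /\ 0 < l u]].

Lemma slope_le (hp : forall v, D v -> l v = 0 -> p <= H v) u w :
  D u -> D w -> 0 < l u -> l w < 0 -> (p - H u) / l u <= (H w - p) / (- l w).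
Proof.
move=> Du Dw lu lw.
set a := l u in lu *; set b := - l w.
have bp : 0 < b by rewrite /b oppr_gt0.
have abp : 0 < a + b by rewrite addr_gt0.
set t := b / (a + b).
have t0 : 0 <= t by rewrite divr_ge0 // ltW.
have t1 : t <= 1 by rewrite ler_pdivrMr // mul1r lerDr ltW.
have ht : 1 - t = a / (a + b) by rewrite /t; field; rewrite lt0r_neq0.
(* the point of the segment [u, w] on the hyperplane [l = 0] *)
have lc : l (comb t u w) = 0.
  by rewrite al ht /t -/a -[l w]opprK -/b; field; rewrite lt0r_neq0.
have h3 : p <= t * H u + (1 - t) * H w.
  exact: le_trans (hp _ (cD t0 t1 Du Dw) lc) (cH t0 t1 Du Dw).
rewrite ht /t in h3; rewrite -subr_ge0.
have -> : (H w - p) / - l w - (p - H u) / a =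
    ((b / (a + b) * H u + a / (a + b) * H w) - p) * (a + b) / (a * b).
  rewrite /b; field; rewrite lt_eqF // gt_eqF //=.
  by move: abp; rewrite /b => abp; rewrite gt_eqF.
apply: divr_ge0; [apply: mulr_ge0; [by rewrite subr_ge0|exact: ltW]|apply: mulr_ge0; exact: ltW].
Qed.

Lemma slopes_ubound (hp : forall v, D v -> l v = 0 -> p <= H v) w :
  D w -> l w < 0 -> ubound slopes ((H w - p) / (- l w)).
Proof. by move=> Dw lw _ [u [Du lu] <-]; exact: slope_le. Qed.

Lemma multiplier_of_slope_bounds k :
  (forall v, D v -> l v = 0 -> p <= H v) ->
  (forall u, D u -> 0 < l u -> (p - H u) / l u <= k) ->
  (forall w, D w -> l w < 0 -> k <= (H w - p) / (- l w)) ->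
  forall v, D v -> p <= H v + k * l v.
Proof.
move=> h0 hu hw v Dv.
case: (ltgtP (l v) 0) => lv.
- by have := hw v Dv lv; rewrite ler_pdivlMr ?oppr_gt0 // => h; lra.
- by have := hu v Dv lv; rewrite ler_pdivrMr // => h; lra.
- by rewrite lv mulr0 addr0; apply: h0.
Qed.

Lemma multiplier_le : (forall v, D v -> l v <= 0 -> p <= H v) ->
  (exists w, D w /\ l w < 0) ->
  exists2 k, 0 <= k & forall v, D v -> p <= H v + k * l v.
Proof.
move=> hp [w0 [Dw0 lw0]].
have hp0 v : D v -> l v = 0 -> p <= H v by move=> Dv lv; apply: hp => //; rewrite lv.
have hw0 w : D w -> l w < 0 -> 0 <= (H w - p) / (- l w).
  by move=> Dw lw; rewrite divr_ge0 ?oppr_ge0 ?subr_ge0 ?(ltW lw) // hp // ltW.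
have hub : has_ubound slopes by exists ((H w0 - p) / (- l w0)); apply: slopes_ubound.
exists (Num.max 0 (sup slopes)); first by rewrite le_max lexx.
apply: multiplier_of_slope_bounds => // [u Du lu|w Dw lw].
  by rewrite le_max ub_le_sup ?orbT //; exists u.
rewrite ge_max hw0 //=.
have [ne|e] := pselect (slopes !=set0); first by apply: ge_sup => //; apply: slopes_ubound.
have -> : slopes = set0 by apply/seteqP; split => // x Sx; apply: e; exists x.
by rewrite sup0 hw0.
Qed.

Lemma multiplier_eq : (forall v, D v -> l v = 0 -> p <= H v) ->
  (forall v, D v -> l v != 0 -> exists w, D w /\ l v * l w < 0) ->
  exists k, forall v, D v -> p <= H v + k * l v.
Proof.
move=> hp hs.
have [[u0 [Du0 lu0]]|nou] := pselect (exists u, D u /\ 0 < l u).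
  have [w0 [Dw0]] := hs u0 Du0 (lt0r_neq0 lu0); rewrite pmulr_rlt0 // => lw0.
  have hub : has_ubound slopes by exists ((H w0 - p) / (- l w0)); apply: slopes_ubound.
  exists (sup slopes); apply: multiplier_of_slope_bounds => // [u Du lu|w Dw lw].
    by apply: ub_le_sup => //; exists u.
  by apply: ge_sup; [exists ((p - H u0) / l u0), u0 | apply: slopes_ubound].
exists 0 => v Dv; rewrite mul0r addr0; apply: hp => //.
case: (ltgtP (l v) 0) => // lv; exfalso; apply: nou; last by exists v.
have [w [Dw]] := hs v Dv (ltr0_neq0 lv); rewrite nmulr_rlt0 // => lw; by exists w.
Qed.

End OneConstraint.

Lemma big_setD1_update (I : finType) (S : {set I}) k (x : R) (mu F : I -> R) : k \in S ->
  \sum_(i in S) (if i == k then x else mu i) * F i = x * F k + \sum_(i in S :\ k) mu i * F i.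
Proof.
move=> kS; rewrite (big_setD1 k kS) /= eqxx; congr (_ + _).
by apply: eq_bigr => i; rewrite in_setD1 => /andP[/negPf -> _].
Qed.

Section EqualityConstraints.
Variables (I : finType) (e : I -> V -> R).
Hypothesis he : forall i, affine_fun (e i).

Lemma multipliers_eq (S : {set I}) D v0 H p :
  convex_set D -> ri_point D v0 -> (forall i, i \in S -> e i v0 = 0) -> convex_on D H ->
  (forall v, D v -> (forall i, i \in S -> e i v = 0) -> p <= H v) ->
  exists mu : I -> R, forall v, D v -> p <= H v + \sum_(i in S) mu i * e i v.
Proof.
have [N] := ubnP #|S|; elim: N H S => // N IH H S /ltnSE cS.
have [->|[k kS]] := set_0Vmem S.
  move=> _ _ _ _ hp; exists (fun=> 0) => v Dv.
  by rewrite big_set0 addr0; apply: hp => // i; rewrite inE.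
move=> cD rD hv0 cH hp.
set D' := fun v => D v /\ forall i, i \in S :\ k -> e i v = 0.
have [kk hk] : exists kk, forall v, D' v -> p <= H v + kk * e k v.
  apply: multiplier_eq (he k) _ _.
  - exact: convex_set_eq0.
  - by apply: sub_convex_on cH => v [].
  - move=> v [Dv hv] ekv; apply: hp => // i iS.
    by have [->//|ik] := eqVneq i k; apply: hv; rewrite in_setD1 ik.
  (* push [v] through [v0] to the other side of the hyperplane [e k = 0] *)
  - move=> v [Dv hv] ekv; have [eps eps0 heps] := rD.2 v Dv.
    exists (comb (1 + eps) v0 v); split.
      split; first exact: heps.
      move=> i iS'; rewrite he hv0 ?hv //; last by move: iS'; rewrite in_setD1 => /andP[].
      by rewrite !mulr0 addr0.
    rewrite he hv0 // mulr0 add0r (_ : 1 - (1 + eps) = - eps); last by ring.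
    by rewrite mulNr mulrN oppr_lt0 mulrCA mulr_gt0 // lt0r mulf_neq0 //= -expr2 sqr_ge0.
have cS' : (#|S :\ k| < N)%N by move: cS; rewrite (cardsD1 k S) kS.
have hv0' i : i \in S :\ k -> e i v0 = 0 by rewrite in_setD1 => /andP[_]; apply: hv0.
have [mu hmu] := IH _ _ cS' cD rD hv0'
  (convex_onDr cH (affine_funZ kk (he k))) (fun v Dv hv => hk v (conj Dv hv)).
exists (fun i => if i == k then kk else mu i) => v Dv.
by rewrite big_setD1_update // addrA; apply: hmu.
Qed.

End EqualityConstraints.

Section MixedConstraints.
Variables (I I' : finType) (l : I -> V -> R) (e : I' -> V -> R).
Hypotheses (hl : forall i, affine_fun (l i)) (he : forall i, affine_fun (e i)).

Definition multiplier_rule_le (J : {set I}) := forall D v0 H p,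
  convex_set D -> ri_point D v0 -> (forall i, i \in J -> l i v0 <= 0) -> convex_on D H ->
  (forall v, D v -> (forall i, i \in J -> l i v <= 0) -> p <= H v) ->
  exists2 kap : I -> R, (forall i, 0 <= kap i) &
    forall v, D v -> p <= H v + \sum_(i in J) kap i * l i v.

Lemma multipliers_mixed (J : {set I}) (S : {set I'}) D v0 H p :
  multiplier_rule_le J -> convex_set D -> ri_point D v0 ->
  (forall i, i \in J -> l i v0 <= 0) -> (forall i, i \in S -> e i v0 = 0) -> convex_on D H ->
  (forall v, D v -> (forall i, i \in J -> l i v <= 0) -> (forall i, i \in S -> e i v = 0) ->
     p <= H v) ->
  exists (kap : I -> R) (mu : I' -> R), (forall i, 0 <= kap i) /\
    forall v, D v -> p <= H v + \sum_(i in J) kap i * l i v + \sum_(i in S) mu i * e i v.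
Proof.
move=> rule cD rD hl0 he0 cH hp.
have [kap kap0 hk] := rule _ v0 H p (convex_set_eq0 (S := S) he cD) (ri_point_eq0 he rD he0) hl0
  (sub_convex_on (fun v => @proj1 _ _) cH) (fun v '(conj Dv hev) hlv => hp v Dv hlv hev).
have [mu hmu] := multipliers_eq he cD rD he0 (convex_onDr cH (affine_fun_sum J kap hl))
  (fun v Dv hev => hk v (conj Dv hev)).
by exists kap, mu.
Qed.

End MixedConstraints.

Section InequalityConstraints.
Variables (I : finType) (l : I -> V -> R).
Hypothesis hl : forall i, affine_fun (l i).

Lemma implicit_equalities (J : {set I}) (c : I -> R) v :
  (forall i, 0 <= c i) -> 0 <= \sum_(i in J) c i * l i v ->
  (forall i, i \in J -> l i v <= 0) -> forall i, i \in J -> 0 < c i -> l i v = 0.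
Proof.
move=> c0 hs hv i iJ ci.
have hF j : j \in J -> 0 <= - (c j * l j v) by move=> jJ; rewrite oppr_ge0 mulr_ge0_le0 ?hv.
have : - (c i * l i v) = 0.
  apply: (psumr_eq0P hF) => //; apply/eqP.
  by rewrite eq_le sumr_ge0 // andbT sumrN oppr_le0.
by move/eqP; rewrite oppr_eq0 mulf_eq0 gt_eqF //= => /eqP.
Qed.

Lemma absorb_multipliers (S : {set I}) (c mu : I -> R) : (forall i, i \in S -> 0 < c i) ->
  exists2 C, 0 <= C & forall i, i \in S -> 0 <= mu i + C * c i.
Proof.
move=> cS; have q0 j : j \in S -> 0 <= `|mu j| / c j by move=> jS; rewrite divr_ge0 // ltW // cS.
exists (\sum_(j in S) `|mu j| / c j); first exact: sumr_ge0.
move=> i iS; have ci := cS i iS.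
have : `|mu i| / c i <= \sum_(j in S) `|mu j| / c j.
  by rewrite (big_setD1 i iS) /= lerDl sumr_ge0 // => j /setD1P[_ /q0].
rewrite ler_pdivrMr // => h; have := ler_norm (- mu i); rewrite normrN; lra.
Qed.

Lemma multiplier_rule_le_degenerate (J : {set I}) k :
  k \in J -> (forall J' : {set I}, (#|J'| < #|J|)%N -> multiplier_rule_le l J') ->
  forall D v0 H p, convex_set D -> ri_point D v0 -> (forall i, i \in J -> l i v0 <= 0) ->
  convex_on D H -> (forall v, D v -> (forall i, i \in J -> l i v <= 0) -> p <= H v) ->
  (forall v, D v -> (forall i, i \in J :\ k -> l i v <= 0) -> 0 <= l k v) ->
  exists2 kap : I -> R, (forall i, 0 <= kap i) &
    forall v, D v -> p <= H v + \sum_(i in J) kap i * l i v.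
Proof.
move=> kJ IH D v0 H p cD rD hv0 cH hp hk.
have ltJ (J' : {set I}) : J' \subset J :\ k -> (#|J'| < #|J|)%N.
  by move=> sJ; apply: leq_ltn_trans (subset_leq_card sJ) _; rewrite (cardsD1 k J) kJ.
have [lam lam0 hlam] := IH _ (ltJ _ (subxx _)) D v0 (l k) 0 cD rD
  (fun i iJk => hv0 i (fintype.subsetP (subD1set J k) i iJk)) (affine_fun_convex_on (hl k)) hk.
(* [l k + \sum lam i * l i >= 0] on [D], so the constraints with a positive
   coefficient [c i] are implicit equalities of the feasible set. *)
pose c i := if i == k then 1 else lam i.
have c0 i : 0 <= c i by rewrite /c; case: eqP.
have hG v : D v -> 0 <= \sum_(i in J) c i * l i v.
  by move=> Dv; rewrite big_setD1_update // mul1r; apply: hlam.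
pose S := [set i in J | 0 < c i].
have cS i : i \in S -> 0 < c i by rewrite inE => /andP[].
have SJ : S \subset J by apply/fintype.subsetP => i; rewrite inE => /andP[].
have sJS : J :\: S \subset J :\ k by apply: finset.setDS; rewrite finset.sub1set inE kJ /c eqxx ltr01.
have hS0 v : D v -> (forall i, i \in J -> l i v <= 0) -> forall i, i \in S -> l i v = 0.
  by move=> Dv hv i /setIdP[iJ ci]; exact: implicit_equalities c0 (hG v Dv) hv i iJ ci.
have hpS v : D v -> (forall i, i \in J :\: S -> l i v <= 0) ->
    (forall i, i \in S -> l i v = 0) -> p <= H v.
  move=> Dv hvJ hvS; apply: hp => // i iJ.
  by have [/hvS ->//|iS] := boolP (i \in S); apply: hvJ; rewrite inE iS.
have [kap [mu [kap0 hkm]]] := multipliers_mixed hl hl (IH _ (ltJ _ sJS)) cD rD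
  (fun i iJS => hv0 i (fintype.subsetP (subsetDl J S) i iJS)) (hS0 v0 rD.1 hv0) cH hpS.
have [C C0 hC] := absorb_multipliers mu cS.
pose kap' i := if i \in S then mu i + C * c i else kap i.
exists kap'; first by move=> i; rewrite /kap'; case: ifP => // /hC.
move=> v Dv.
have hcS : \sum_(i in J) c i * l i v = \sum_(i in S) c i * l i v.
  rewrite (big_setID S) /= (finset.setIidPr SJ) [X in _ + X]big1 ?addr0 // => i /setDP[iJ iS].
  have ci : c i = 0.
    by apply/le_anti; rewrite c0 andbT leNgt; apply: contra iS => ci; rewrite inE iJ.
  by rewrite ci mul0r.
have eS : \sum_(i in S) kap' i * l i v =
    \sum_(i in S) mu i * l i v + C * \sum_(i in S) c i * l i v.
  by rewrite mulr_sumr -big_split; apply: eq_bigr => i iS; rewrite /kap' iS mulrDl mulrA.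
have eJS : \sum_(i in J :\: S) kap' i * l i v = \sum_(i in J :\: S) kap i * l i v.
  by apply: eq_bigr => i /setDP[_ /negPf iS]; rewrite /kap' iS.
rewrite (big_setID S) /= (finset.setIidPr SJ) eS eJS.
have := hkm v Dv; have := hG v Dv; rewrite hcS => hg hm.
have : 0 <= C * \sum_(i in S) c i * l i v by apply: mulr_ge0.
lra.
Qed.

Lemma multiplier_rule_le_step (J : {set I}) k : k \in J ->
  (forall J' : {set I}, (#|J'| < #|J|)%N -> multiplier_rule_le l J') -> multiplier_rule_le l J.
Proof.
move=> kJ IH D v0 H p cD rD hv0 cH hp.
pose D' v := D v /\ forall i, i \in J :\ k -> l i v <= 0.
have [[w [Dw lw]]|noA] := pselect (exists w, D' w /\ l k w < 0); last first.
  apply: (multiplier_rule_le_degenerate kJ IH cD rD hv0 cH hp) => v Dv hv.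
  by rewrite leNgt; apply/negP => lkv; apply: noA; exists v.
have hpk v : D' v -> l k v <= 0 -> p <= H v.
  move=> [Dv hv] lkv; apply: hp => // i iJ.
  by have [->//|ik] := eqVneq i k; apply: hv; rewrite in_setD1 ik.
have [kk kk0 hk] := multiplier_le (convex_set_le0 (S := J :\ k) hl cD)
  (sub_convex_on (fun v => @proj1 _ _) cH) (hl k) hpk (ex_intro _ w (conj Dw lw)).
have ltJk : (#|J :\ k| < #|J|)%N by rewrite (cardsD1 k J) kJ.
have [kap kap0 hkap] := IH (J :\ k) ltJk D v0 _ p cD rD
  (fun i iJk => hv0 i (fintype.subsetP (subD1set J k) i iJk))
  (convex_onDr cH (affine_funZ kk (hl k))) (fun v Dv hv => hk v (conj Dv hv)).
exists (fun i => if i == k then kk else kap i); first by move=> i; case: eqP.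
by move=> v Dv; rewrite big_setD1_update // addrA; apply: hkap.
Qed.

Theorem multipliers_le (J : {set I}) : multiplier_rule_le l J.
Proof.
have [N] := ubnP #|J|; elim: N J => // N IH J /ltnSE cJ.
have [->|[k kJ]] := set_0Vmem J.
  move=> D v0 H p _ _ _ _ hp; exists (fun=> 0) => // v Dv.
  by rewrite big_set0 addr0; apply: hp => // i; rewrite inE.
apply: (multiplier_rule_le_step kJ) => J' ltJ'; apply: IH; exact: leq_trans ltJ' cJ.
Qed.

End InequalityConstraints.
End ConvexCombinations.

Section ProductSpaces.
Variables (R : realType) (V1 V2 : Type).
Variables (comb1 : R -> V1 -> V1 -> V1) (comb2 : R -> V2 -> V2 -> V2).

Definition comb_pair t (u v : V1 * V2) := (comb1 t u.1 v.1, comb2 t u.2 v.2).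

Lemma convex_setX D1 D2 :
  convex_set comb1 D1 -> convex_set comb2 D2 -> convex_set comb_pair (D1 `*` D2).
Proof. by move=> c1 c2 t u v t0 t1 [Du1 Du2] [Dv1 Dv2]; split; [exact: c1 | exact: c2]. Qed.

Lemma convex_onX D1 D2 H1 H2 : convex_on comb1 D1 H1 -> convex_on comb2 D2 H2 ->
  convex_on comb_pair (D1 `*` D2) (fun v => H1 v.1 + H2 v.2).
Proof.
move=> c1 c2 t u v t0 t1 [Du1 Du2] [Dv1 Dv2] /=.
by have := c1 t _ _ t0 t1 Du1 Dv1; have := c2 t _ _ t0 t1 Du2 Dv2; lra.
Qed.

Lemma ri_pointX D1 D2 u1 u2 : ri_point comb1 D1 u1 -> ri_point comb2 D2 u2 ->
  ri_point comb_pair (D1 `*` D2) (u1, u2).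
Proof.
move=> [Du1 r1] [Du2 r2]; split; first by split.
move=> v [Dv1 Dv2]; have [e1 e10 he1] := r1 _ Dv1; have [e2 e20 he2] := r2 _ Dv2.
exists (Num.min e1 e2); first by rewrite lt_min e10.
by move=> e' e'0; rewrite le_min => /andP[h1 h2]; split; [exact: he1 | exact: he2].
Qed.

End ProductSpaces.

Section Vectors.
Variable R : realType.

Lemma dotvC N (u v : 'cV[R]_N) : dotv u v = dotv v u.
Proof. by apply: eq_bigr => i _; rewrite mulrC. Qed.

Lemma dotvDr N (u v w : 'cV[R]_N) : dotv u (v + w) = dotv u v + dotv u w.
Proof. by rewrite /dotv -big_split; apply: eq_bigr => i _; rewrite !mxE mulrDr. Qed.

Lemma dotvZr N (u v : 'cV[R]_N) a : dotv u (a *: v) = a * dotv u v.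
Proof. by rewrite /dotv mulr_sumr; apply: eq_bigr => i _; rewrite !mxE mulrCA. Qed.

Lemma dotvNr N (u v : 'cV[R]_N) : dotv u (- v) = - dotv u v.
Proof. by rewrite /dotv -sumrN; apply: eq_bigr => i _; rewrite !mxE mulrN. Qed.

Lemma dotvBr N (u v w : 'cV[R]_N) : dotv u (v - w) = dotv u v - dotv u w.
Proof. by rewrite dotvDr dotvNr. Qed.

Lemma dotvBl N (u v w : 'cV[R]_N) : dotv (v - w) u = dotv v u - dotv w u.
Proof. by rewrite dotvC dotvBr dotvC [dotv u w]dotvC. Qed.

Lemma dotvNl N (u v : 'cV[R]_N) : dotv (- v) u = - dotv v u.
Proof. by rewrite dotvC dotvNr dotvC. Qed.

Lemma dotv_trmx_mul M N (A : 'M[R]_(M, N)) (u : 'cV[R]_M) (x : 'cV[R]_N) :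
  dotv (A^T *m u) x = dotv u (A *m x).
Proof.
rewrite /dotv; under eq_bigr do rewrite !mxE big_distrl /=.
rewrite exchange_big /=; apply: eq_bigr => i _; rewrite !mxE big_distrr /=.
by apply: eq_bigr => j _; rewrite !mxE; ring.
Qed.

Lemma proper_domE N (h : 'cV[R]_N -> \bar R) x : proper_fun h -> dom h x -> h x = (fine (h x))%:E.
Proof. by case=> hn _; move: (hn x); rewrite /dom /=; case: (h x). Qed.

Lemma rel_int_extend N (C : set 'cV[R]_N) x0 v : rel_int C x0 -> C v ->
  exists2 e : R, 0 < e &
    forall e', 0 < e' -> e' <= e -> C ((1 + e') *: x0 + (1 - (1 + e')) *: v).
Proof.
move=> [Cx0 [er er0 her]] Cv.
pose d i := `|x0 i 0 - v i 0|; pose M := 1 + \sum_i d i.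
have dM i : d i < M.
  rewrite /M (bigD1 i) //=.
  have : 0 <= \sum_(j | j != i) d j by apply: sumr_ge0 => j _; rewrite normr_ge0.
  lra.
have M0 : 0 < M.
  rewrite /M; have : 0 <= \sum_i d i by apply: sumr_ge0 => j _; rewrite normr_ge0.
  lra.
exists (er / M); first by rewrite divr_gt0.
move=> e' e'0 e'e; apply: her.
  exists 2%N, (fun j : 'I_2 => if val j == 0%N then x0 else v),
    (fun j : 'I_2 => if val j == 0%N then 1 + e' else 1 - (1 + e')).
  split; first by move=> j; case: ifP.
  by rewrite !big_ord_recl big_ord0 /=; split; [ring|rewrite big_ord0 addr0].
move=> i; rewrite !mxE.
have -> : (1 + e') * x0 i 0 + (1 - (1 + e')) * v i 0 - x0 i 0 = e' * (x0 i 0 - v i 0) by ring.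
rewrite normrM (gtr0_norm e'0) -/(d i).
apply: (le_lt_trans (ler_wpM2r (normr_ge0 _) e'e)).
by rewrite -(ltr_pM2r M0) -mulrA [d i * M]mulrC mulrA divfK ?gt_eqF // ltr_pM2l.
Qed.

Definition comb_epi N (t : R) (u v : 'cV[R]_N * R) : 'cV[R]_N * R :=
  (t *: u.1 + (1 - t) *: v.1, t * u.2 + (1 - t) * v.2).

(* [h] on [dom h] presented as the value of a convex problem on R^N x R with affine
   constraints [cm_cons j <= 0] and a relative-interior point above [x0]: the graph of
   [h] when [x0] is in ri(dom h), the epigraph of [h] when [h] is polyhedral. *)
Record convex_model N (h : 'cV[R]_N -> \bar R) (x0 : 'cV[R]_N) := ConvexModel {
  cm_size : nat;
  cm_dom : set ('cV[R]_N * R);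
  cm_val : 'cV[R]_N * R -> R;
  cm_cons : 'I_cm_size -> 'cV[R]_N * R -> R;
  cm_t0 : R;
  cm_convex_dom : convex_set (@comb_epi N) cm_dom;
  cm_convex_val : convex_on (@comb_epi N) cm_dom cm_val;
  cm_affine_cons : forall j, affine_fun (@comb_epi N) (cm_cons j);
  cm_ri : ri_point (@comb_epi N) cm_dom (x0, cm_t0);
  cm_cons_t0 : forall j, cm_cons j (x0, cm_t0) <= 0;
  cm_lift : forall x, dom h x -> exists t,
    [/\ cm_dom (x, t), cm_val (x, t) = fine (h x) & forall j, cm_cons j (x, t) <= 0];
  cm_proj : forall x t, cm_dom (x, t) -> (forall j, cm_cons j (x, t) <= 0) ->
    dom h x /\ fine (h x) <= cm_val (x, t)
}.

Lemma ri_convex_model N (h : 'cV[R]_N -> \bar R) x0 : proper_fun h -> convex_fun h -> rel_int (dom h) x0 ->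
  inhabited (convex_model h x0).
Proof.
move=> hp hc hri.
have cdom : convex_set (@comb_epi N) (fun u => dom h u.1).
  by move=> t u v t0 t1 Du Dv; apply: le_lt_trans (hc _ _ _ t0 t1 Du Dv) _; rewrite ltry.
have hsum t u v : 0 <= t -> t <= 1 -> dom h u -> dom h v ->
    fine (h (t *: u + (1 - t) *: v)) <= t * fine (h u) + (1 - t) * fine (h v).
  move=> t0 t1 Du Dv; have := hc _ _ _ t0 t1 Du Dv.
  by rewrite (proper_domE hp (cdom t (u, 0) (v, 0) t0 t1 Du Dv)) lee_fin.
constructor; apply: (@ConvexModel N h x0 0 (fun u => dom h u.1) (fun u => fine (h u.1))
  (fun _ _ => 0) 0 cdom) => //.
- by move=> t u v t0 t1 Du Dv; apply: hsum.
- by move=> j t u v; rewrite !mulr0 addr0.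
- split; first exact: hri.1.
  move=> v Dv; have [e e0 he] := rel_int_extend hri Dv.
  by exists e => // e' e'0 e'e; apply: he.
- by move=> x hx; exists 0.
Qed.

Lemma polyhedral_convex_model N (h : 'cV[R]_N -> \bar R) x0 : proper_fun h -> polyhedral_fun h -> dom h x0 ->
  inhabited (convex_model h x0).
Proof.
move=> hp [k [a [al [be hpoly]]]] hx0.
have hle x t : (h x <= t%:E)%E <-> forall j, dotv (a j) x + al j * t - be j <= 0.
  by split => [/hpoly hj j|hj]; [rewrite subr_le0|apply/hpoly => j; rewrite -subr_le0].
constructor; apply: (@ConvexModel N h x0 k setT (fun u => u.2)
  (fun j u => dotv (a j) u.1 + al j * u.2 - be j) (fine (h x0))) => //.
- by move=> j t u v; rewrite /= dotvDr !dotvZr; ring.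
- by split => // v _; exists 1.
- by apply/hle; rewrite -proper_domE.
- by move=> x hx; exists (fine (h x)); split => //; apply/hle; rewrite -proper_domE.
- move=> x t _ /hle hxt; have hx : dom h x by apply: le_lt_trans hxt _; rewrite ltry.
  by split => //; move: hxt; rewrite (proper_domE hp hx) lee_fin.
Qed.

Lemma convex_modelP N (h : 'cV[R]_N -> \bar R) x0 : proper_fun h -> convex_fun h ->
  rel_int (dom h) x0 \/ (polyhedral_fun h /\ dom h x0) -> inhabited (convex_model h x0).
Proof.
move=> hp hc [hri|[hpoly hx0]]; first exact: ri_convex_model.
exact: polyhedral_convex_model.
Qed.

Lemma conj_fun_ge N (h : 'cV[R]_N -> \bar R) q x : proper_fun h -> dom h x ->
  ((dotv q x - fine (h x))%:E <= conj_fun h q)%E.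
Proof. by move=> hp hx; apply: ereal_sup_ubound; exists x => //; rewrite (proper_domE hp hx). Qed.

Lemma conj_fun_le N (h : 'cV[R]_N -> \bar R) q c : proper_fun h ->
  (forall x, dom h x -> dotv q x - fine (h x) <= c) -> (conj_fun h q <= c%:E)%E.
Proof.
move=> hp hc; apply: ge_ereal_sup => _ [x _ <-].
have [hx|] := boolP (h x < +oo)%E; first by rewrite (proper_domE hp hx) -EFinB lee_fin hc.
by rewrite /dom -leNgt leye_eq => /eqP ->; rewrite addeNy leNye.
Qed.

Lemma conj_fun_sum_le N1 N2 (h1 : 'cV[R]_N1 -> \bar R) (h2 : 'cV[R]_N2 -> \bar R) q1 q2 c :
  proper_fun h1 -> proper_fun h2 ->
  (forall x w, dom h1 x -> dom h2 w ->
     dotv q1 x - fine (h1 x) + (dotv q2 w - fine (h2 w)) <= c) ->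
  (conj_fun h1 q1 + conj_fun h2 q2 <= c%:E)%E.
Proof.
move=> hp1 hp2 hc.
have hc1 w : dom h2 w -> (conj_fun h1 q1 <= (c - (dotv q2 w - fine (h2 w)))%:E)%E.
  by move=> hw; apply: conj_fun_le => // x hx; have := hc x w hx hw; lra.
have cf1 : conj_fun h1 q1 = (fine (conj_fun h1 q1))%:E.
  have [x1 hx1] := hp1.2; have [w1 hw1] := hp2.2.
  by move: (conj_fun_ge q1 hp1 hx1) (hc1 w1 hw1); case: (conj_fun h1 q1).
have : (conj_fun h2 q2 <= (c - fine (conj_fun h1 q1))%:E)%E.
  by apply: conj_fun_le => // w hw; have := hc1 w hw; rewrite cf1 lee_fin; lra.
rewrite cf1; case: (conj_fun h2 q2) => [c2| |] //= => [|_].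
  by rewrite -EFinD !lee_fin; lra.
by rewrite addeNy leNye.
Qed.

End Vectors.

Arguments cm_cons {R N h x0} c j.
Arguments cm_convex_dom {R N h x0} c.
Arguments cm_convex_val {R N h x0} c.
Arguments cm_affine_cons {R N h x0} c j.
Arguments cm_ri {R N h x0} c.
Arguments cm_cons_t0 {R N h x0} c j.

Section Duality.
Variables (R : realType) (n m r : nat).
Variables (f : 'cV[R]_n -> \bar R) (g : 'cV[R]_m -> \bar R).
Variables (A : 'M[R]_(m, n)) (B : 'M[R]_(r, n)) (b : 'cV[R]_r).
Hypotheses (hfp : proper_fun f) (hgp : proper_fun g).

Lemma Xi_le_lagrangian (p : R) (y : 'cV[R]_m) (z : 'cV[R]_r) :
  (forall x w, dom f x -> dom g w ->
     p <= fine (f x) + fine (g w) - dotv y (w - A *m x) + dotv z (B *m x - b)) ->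
  (Xi f g A B b y z <= (- p)%:E)%E.
Proof.
move=> hL; rewrite /Xi.
have hc : (conj_fun f (- (A^T *m y) - B^T *m z) + conj_fun g y <= (- p - dotv b z)%:E)%E.
  apply: conj_fun_sum_le => // x w hx hw; have := hL x w hx hw.
  by rewrite dotvBl !dotvNl !dotv_trmx_mul !dotvBr [dotv z b]dotvC; lra.
by apply: le_trans (leeD hc (lexx _)) _; rewrite -EFinD lee_fin; lra.
Qed.

Definition primal_feasible (S : {set 'I_r}) : set 'cV[R]_n :=
  [set x | dom f x /\ dom g (A *m x) /\ forall i, i \in S -> (B *m x) i 0 = b i 0].

Definition primal_value (S : {set 'I_r}) : R :=
  inf [set fine (f x) + fine (g (A *m x)) | x in primal_feasible S].

Lemma Xi_ge_primal (S : {set 'I_r}) (y : 'cV[R]_m) (z : 'cV[R]_r) (x : 'cV[R]_n) : (forall i, i \notin S -> z i 0 = 0) ->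
  primal_feasible S x -> ((- (fine (f x) + fine (g (A *m x))))%:E <= Xi f g A B b y z)%E.
Proof.
move=> zS [hx [hAx hBx]].
have hz : dotv z (B *m x - b) = 0.
  rewrite /dotv big1 // => i _; have [iS|/zS->] := boolP (i \in S); last by rewrite mul0r.
  have -> : (B *m x - b) i 0 = (B *m x) i 0 - b i 0 by rewrite !mxE.
  by rewrite hBx // subrr mulr0.
apply: le_trans (leeD (leeD (conj_fun_ge _ hfp hx) (conj_fun_ge y hgp hAx)) (lexx _)).
rewrite -!EFinD lee_fin.
by move: hz; rewrite dotvBl !dotvNl !dotv_trmx_mul !dotvBr [dotv b z]dotvC; lra.
Qed.

Variables (x0 : 'cV[R]_n) (M0 : R).
Hypotheses (hx0f : dom f x0) (hx0g : dom g (A *m x0)) (hBx0 : B *m x0 = b).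
Hypothesis hM0 : forall x, (M0%:E <= f x + g (A *m x))%E.

Lemma primal_feasible_x0 (S : {set 'I_r}) : primal_feasible S x0.
Proof. by split => //; split => // i _; rewrite hBx0. Qed.

Lemma primal_value_le (S : {set 'I_r}) (x : 'cV[R]_n) :
  primal_feasible S x -> primal_value S <= fine (f x) + fine (g (A *m x)).
Proof.
move=> hx; apply: ge_inf; last by exists x.
exists M0 => _ [x' [hx' [hAx' _]] <-].
by have := hM0 x'; rewrite (proper_domE hfp hx') (proper_domE hgp hAx') -EFinD lee_fin.
Qed.

Lemma primal_value_ge (S : {set 'I_r}) (c : R) :
  (forall x, primal_feasible S x -> c <= fine (f x) + fine (g (A *m x))) -> c <= primal_value S.
Proof.
move=> hc; apply: lb_le_inf; first by exists (fine (f x0) + fine (g (A *m x0))), x0;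
  first exact: primal_feasible_x0.
by move=> _ [x hx <-]; apply: hc.
Qed.

Lemma weak_duality (S : {set 'I_r}) (y : 'cV[R]_m) (z : 'cV[R]_r) : (forall i, i \notin S -> z i 0 = 0) ->
  ((- primal_value S)%:E <= Xi f g A B b y z)%E.
Proof.
move=> zS; have := Xi_ge_primal y zS (primal_feasible_x0 S).
case E: (Xi f g A B b y z) => [c| |] // hc; last exact: leey.
rewrite lee_fin lerNl; apply: primal_value_ge => x hx.
by have := Xi_ge_primal y zS hx; rewrite E lee_fin; lra.
Qed.

Lemma primal_value_le_models (Mf : convex_model f x0) (Mg : convex_model g (A *m x0))
    (S : {set 'I_r}) x t w s : cm_dom Mf (x, t) -> cm_dom Mg (w, s) ->
  (forall j, cm_cons Mf j (x, t) <= 0) -> (forall j, cm_cons Mg j (w, s) <= 0) ->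
  w = A *m x -> (forall i, i \in S -> (B *m x) i 0 = b i 0) ->
  primal_value S <= cm_val Mf (x, t) + cm_val Mg (w, s).
Proof.
move=> Dx Dw cx cw wAx hB; subst w.
have [hx hfx] := cm_proj Dx cx; have [hAx hgx] := cm_proj Dw cw.
have hxS : primal_feasible S x by split => //; split.
exact: le_trans (primal_value_le hxS) (lerD hfx hgx).
Qed.

Hypotheses (hfc : convex_fun f) (hgc : convex_fun g).
Hypotheses (hqf : rel_int (dom f) x0 \/ (polyhedral_fun f /\ dom f x0))
  (hqg : rel_int (dom g) (A *m x0) \/ (polyhedral_fun g /\ dom g (A *m x0))).

Lemma lagrange_multipliers (S : {set 'I_r}) : exists (y : 'cV[R]_m) (z : 'cV[R]_r),
  (forall i, i \notin S -> z i 0 = 0) /\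
  forall x w, dom f x -> dom g w ->
    primal_value S <= fine (f x) + fine (g w) - dotv y (w - A *m x) + dotv z (B *m x - b).
Proof.
have [Mf] := convex_modelP hfp hfc hqf; have [Mg] := convex_modelP hgp hgc hqg.
pose comb := comb_pair (@comb_epi R n) (@comb_epi R m).
pose ineq (i : 'I_(cm_size Mf) + 'I_(cm_size Mg)) (v : ('cV[R]_n * R) * ('cV[R]_m * R)) :=
  match i with inl j => cm_cons Mf j v.1 | inr j => cm_cons Mg j v.2 end.
(* the constraint [(B x)_i = b_i] is switched off, not dropped, when [i \notin S] *)
pose eqc (i : 'I_m + 'I_r) (v : ('cV[R]_n * R) * ('cV[R]_m * R)) :=
  match i with
  | inl j => (v.2.1 - A *m v.1.1) j 0
  | inr i => (i \in S)%:R * (B *m v.1.1 - b) i 0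
  end.
have aineq i : affine_fun comb (ineq i) by case: i => j t u v; apply: cm_affine_cons.
have aeq i : affine_fun comb (eqc i).
  by case: i => j t u v /=; rewrite /comb_epi /= mulmxDr -!scalemxAr !mxE; ring.
have hp v : (cm_dom Mf `*` cm_dom Mg) v -> (forall i, i \in [set: _]%SET -> ineq i v <= 0) ->
    (forall i, i \in [set: _]%SET -> eqc i v = 0) -> primal_value S <= cm_val Mf v.1 + cm_val Mg v.2.
  case: v => [[x t] [w s]] [Dx Dw] hi he.
  apply: primal_value_le_models Dx Dw (fun j => hi (inl j) (finset.in_setT _))
    (fun j => hi (inr j) (finset.in_setT _)) _ _.
    apply/matrixP => j k; rewrite (ord1 k); apply/eqP; rewrite -subr_eq0.
    by have := he (inl j) (finset.in_setT _); rewrite /= !mxE => ->.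
  move=> i iS; apply/eqP; rewrite -subr_eq0.
  by have := he (inr i) (finset.in_setT _); rewrite /= iS mul1r !mxE => ->.
pose v0 := ((x0, cm_t0 Mf), (A *m x0, cm_t0 Mg)).
have hineq0 i : i \in [set: _]%SET -> ineq i v0 <= 0 by case: i => j _; apply: cm_cons_t0.
have heq0 i : i \in [set: _]%SET -> eqc i v0 = 0.
  by case: i => j _ /=; rewrite ?hBx0 subrr mxE ?mulr0.
have [kap [mu [kap0 hk]]] := multipliers_mixed aineq aeq (multipliers_le (J := [set: _]%SET) aineq)
  (convex_setX (cm_convex_dom Mf) (cm_convex_dom Mg)) (ri_pointX (cm_ri Mf) (cm_ri Mg))
  hineq0 heq0 (convex_onX (cm_convex_val Mf) (cm_convex_val Mg)) hp.
exists (- \col_j mu (inl j)), (\col_i ((i \in S)%:R * mu (inr i))); split.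
  by move=> i /negPf iS; rewrite mxE iS mul0r.
move=> x w hx hw.
have [t [Dx <- cx]] := cm_lift Mf hx; have [s [Dw <- cw]] := cm_lift Mg hw.
have := hk ((x, t), (w, s)) (conj Dx Dw).
have hineq : \sum_(i in [set: _]%SET) kap i * ineq i ((x, t), (w, s)) <= 0.
  by apply: sumr_le0 => -[j|j] _; apply: mulr_ge0_le0 (kap0 _) _; [exact: cx | exact: cw].
have heq : \sum_(i in [set: _]%SET) mu i * eqc i ((x, t), (w, s)) =
    - dotv (- \col_j mu (inl j)) (w - A *m x) +
    dotv (\col_i ((i \in S)%:R * mu (inr i))) (B *m x - b).
  rewrite (eq_bigl xpredT) => [|i]; last by rewrite inE.
  rewrite big_sumType /= /dotv -sumrN; congr (_ + _); apply: eq_bigr => i _; rewrite !mxE; ring.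
rewrite /= heq; lra.
Qed.

Lemma strong_duality (S : {set 'I_r}) : exists (y : 'cV[R]_m) (z : 'cV[R]_r),
  (forall i, i \notin S -> z i 0 = 0) /\ (Xi f g A B b y z <= (- primal_value S)%:E)%E.
Proof.
have [y [z [zS hL]]] := lagrange_multipliers S.
by exists y, z; split => //; apply: Xi_le_lagrangian.
Qed.

End Duality.

Lemma Psi0_support (R : realType) r (mu z : 'cV[R]_r) :
  Psi0 mu z = \sum_(i in [set i | z i 0 != 0]%SET) mu i 0.
Proof.
rewrite /Psi0 [RHS]big_mkcond /=; apply: eq_bigr => i _; rewrite inE.
by case: (z i 0 != 0); rewrite ?mulr1 ?mulr0.
Qed.

Lemma Psi0_le_support (R : realType) r (mu z : 'cV[R]_r) (T : {set 'I_r}) :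
  (forall i, 0 <= mu i 0) -> (forall i, i \notin T -> z i 0 = 0) ->
  Psi0 mu z <= \sum_(i in T) mu i 0.
Proof.
move=> mu0 zT; rewrite /Psi0 [X in _ <= X]big_mkcond /=; apply: ler_sum => i _.
have [iT|/zT ->] := boolP (i \in T); last by rewrite eqxx mulr0.
by case: (z i 0 != 0); rewrite ?mulr1 ?mulr0.
Qed.

Theorem mainTheorem7 (R : realType) (n m r : nat)
    (f : 'cV[R]_n -> \bar R) (g : 'cV[R]_m -> \bar R)
    (A : 'M[R]_(m, n)) (B : 'M[R]_(r, n)) (b : 'cV[R]_r)
    (hfp : proper_fun f) (hfl : lsc_fun f) (hfc : convex_fun f)
    (hgp : proper_fun g) (hgl : lsc_fun g) (hgc : convex_fun g)
    (hbdd : exists M : R, forall x : 'cV[R]_n, (M%:E <= f x + g (A *m x))%E)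
    (hqual : exists x : 'cV[R]_n,
        (rel_int (dom f) x \/ (polyhedral_fun f /\ dom f x)) /\
        (rel_int (dom g) (A *m x) \/ (polyhedral_fun g /\ dom g (A *m x))) /\
        B *m x = b) :
  forall mu : 'cV[R]_r, (forall i, 0 < mu i 0) ->
    exists (y0 : 'cV[R]_m) (z0 : 'cV[R]_r),
      forall (y : 'cV[R]_m) (z : 'cV[R]_r),
        (Xi f g A B b y0 z0 + (Psi0 mu z0)%:E <= Xi f g A B b y z + (Psi0 mu z)%:E)%E.
Proof.
move=> mu hmu.
have [x0 [hqf [hqg hBx0]]] := hqual; have [M hM] := hbdd.
have hx0f : dom f x0 by case: hqf => -[].
have hx0g : dom g (A *m x0) by case: hqg => -[].
(* [val S] is the optimal value of the dual problem restricted to [z] supported on [S] *)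
pose val (S : {set 'I_r}) := - primal_value f g A B b S + \sum_(i in S) mu i 0.
have [S0 _ hS0] := @arg_minP _ _ _ [set: 'I_r]%SET xpredT val isT.
have [y0 [z0 [zS0 hXi0]]] := strong_duality hfp hgp hBx0 hM hfc hgc hqf hqg S0.
exists y0, z0 => y z.
have zS : forall i, i \notin [set i | z i 0 != 0]%SET -> z i 0 = 0.
  by move=> i; rewrite inE negbK => /eqP.
apply: (@le_trans _ _ (val S0)%:E).
  by rewrite /val EFinD leeD // lee_fin Psi0_le_support // => i; apply: ltW.
apply: (@le_trans _ _ (val [set i | z i 0 != 0]%SET)%:E); first by rewrite lee_fin hS0.
by rewrite /val EFinD -Psi0_support leeD // (weak_duality hfp hgp hx0f hx0g hBx0).
Qed.
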